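(* In the setting of the context, consider a Case 1 spacetime ($x_-(v)\equiv0$). If $(dx_+/dv)/x_+^2$ converges as $v\to\infty$ and $\lim_{v\to\infty}\frac{dx_+/dv}{x_+(v)^2}>-\frac{h_c}{2}$, then the spacetime is of Type 2.
   Context: Spherically symmetric spacetime $ds^2=-f(v,r)A(v,r)^2dv^2+2A(v,r)\,dr\,dv+r^2d\Omega^2$ with $A>0$, $f,A\to1$ as $r\to\infty$, $f(v,0)=1$, $\partial_rf(v,0)=\partial_rA(v,0)=0$; $f(v,\cdot)$ has exactly two zeros $r_+(v)>r_-(v)$ (outer/inner apparent horizons, AHs), $f=F(r-r_+)(r-r_-)$ with $F>0$, and $h=AF>0$. Assumptions: $\partial_v r_+<0$; $r_\pm(v)\to r_c$ as $v\to\infty$; the sign of $\partial_v r_-$ is constant; the $v\to\infty$ limits of $A,F,h$ behave as analytic functions of $r$, so all $\partial_r^n h$ converge as $v\to\infty$; $h_c=\lim_{v\to\infty}h(v,r_c)$. With $x=r-r_c$, $x_\pm=r_\pm-r_c$ and $h$ regarded as a function of $(v,x)$, radially outgoing null geodesics solve $dx/dv=\tfrac12h(v,x)(x-x_+(v))(x-x_-(v))$. Case 1 means $\partial_v r_-=0$. Type 1 (Case 1) means every outgoing null geodesic strictly between the two AHs crosses the outer AH (the inner AH is the event horizon); Type 2 means there is an event horizon strictly outside the inner AH. *)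

From Stdlib Require Import Reals Lra.
From Coquelicot Require Import Coquelicot.
Open Scope R_scope.

(* Case 1 (x_- == 0): radially outgoing null geodesic x(v), v >= v0, solving
   dx/dv = 1/2 h(v,x) (x - x_+(v)) (x - 0). *)
Definition outgoing_geodesic (h : R -> R -> R) (xp : R -> R) (v0 : R)
  (x : R -> R) : Prop :=
  forall v, v0 <= v -> is_derive x v (/2 * h v (x v) * (x v - xp v) * (x v - 0)).

(* Type 1: every outgoing null geodesic starting strictly between the AHs
   (0 < x < x_+) eventually reaches/crosses the outer AH. *)
Definition type1 (h : R -> R -> R) (xp : R -> R) : Prop :=
  forall v0 x, outgoing_geodesic h xp v0 x -> 0 < x v0 < xp v0 ->
    exists v, v0 <= v /\ xp v <= x v.

(* Type 2: there is an event horizon strictly outside the inner AH, i.e. an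
   outgoing null geodesic that stays forever strictly between the inner AH
   (x = 0) and the outer AH (x = x_+). *)
Definition type2 (h : R -> R -> R) (xp : R -> R) : Prop :=
  exists v0 x, outgoing_geodesic h xp v0 x /\
    forall v, v0 <= v -> 0 < x v < xp v.

From Stdlib Require Import Reals Lra Psatz Classical ClassicalEpsilon RList.
From Coquelicot Require Import Coquelicot.
Open Scope R_scope.

(* Fix a small fraction th and a late time T0, and start an outgoing geodesic at
   x = th x_+(T0) / 2.  On the curve x = th x_+ the null field equals
   th x_+^2 h (th - 1) / 2, while the curve itself has slope th x_+^2 (x_+' / x_+^2);
   since lim x_+' / x_+^2 > - h_c / 2, for th small and v large the field is the
   smaller of the two, so the geodesic can never reach th x_+ from below.  Near x = 0
   the field is at least - (h x_+ / 2) x, so a decaying exponential stays below the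
   geodesic and it never reaches 0.  The geodesic itself is built by Picard iteration
   for the field with x clamped to [0, x_+(T0)], which is bounded and Lipschitz in x
   locally uniformly in v; between the two barriers the clamp is inactive. *)

Lemma continuous_of_ex_derive (f : R -> R) (v : R) : ex_derive f v -> continuous f v.
Proof. exact (ex_derive_continuous (K := R_AbsRing) (V := R_NormedModule) f v). Qed.

Lemma continuous_of_lipschitz (f : R -> R) (M v : R) : 0 < M ->
  (forall u, Rabs (f u - f v) <= M * Rabs (u - v)) -> continuous f v.
Proof.
  intros HM Hf. apply filterlim_locally. intros eps.
  assert (He : 0 < eps / M) by (apply Rdiv_lt_0_compat; [apply cond_pos | exact HM]).
  exists (mkposreal _ He). intros u Hu.
  change (Rabs (u - v) < eps / M) in Hu. change (Rabs (f u - f v) < eps).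
  apply Rle_lt_trans with (1 := Hf u).
  apply Rmult_lt_compat_l with (r := M) in Hu; [|exact HM].
  replace (M * (eps / M)) with (pos eps) in Hu by (field; lra). exact Hu.
Qed.

Lemma continuous_lt_near (g : R -> R) (v c : R) : continuous g v -> g v < c ->
  exists eta, 0 < eta /\ forall u, Rabs (u - v) < eta -> g u < c.
Proof.
  intros Hg Hc. assert (He : 0 < c - g v) by lra.
  destruct (proj1 (filterlim_locally g (g v)) Hg (mkposreal _ He)) as [eta Heta].
  exists eta. split; [apply cond_pos|]. intros u Hu.
  assert (Hu' : Rabs (g u - g v) < c - g v) by exact (Heta u Hu).
  apply Rabs_def2 in Hu'. lra.
Qed.

Lemma continuous_gt_near (g : R -> R) (v c : R) : continuous g v -> c < g v ->
  exists eta, 0 < eta /\ forall u, Rabs (u - v) < eta -> c < g u.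
Proof.
  intros Hg Hc.
  destruct (continuous_lt_near (fun u => - g u) v (- c)) as [eta [Heta Hnear]].
  - apply (continuous_opp g), Hg.
  - lra.
  - exists eta. split; [exact Heta|]. intros u Hu. specialize (Hnear u Hu). lra.
Qed.

Lemma is_derive_neg_left (g : R -> R) (c d : R) : is_derive g c d -> d < 0 ->
  exists eta, 0 < eta /\ forall u, c - eta < u < c -> g c < g u.
Proof.
  intros Hg Hd. apply is_derive_Reals in Hg.
  destruct (Hg (- d / 2)) as [eta Heta]; [lra|].
  exists eta. split; [apply cond_pos|]. intros u Hu.
  assert (Hne : u - c <> 0) by lra.
  assert (Hclose : Rabs (u - c) < eta) by (rewrite Rabs_left; lra).
  specialize (Heta (u - c) Hne Hclose). replace (c + (u - c)) with u in Heta by ring.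
  apply Rabs_def2 in Heta.
  set (q := (g u - g c) / (u - c)) in Heta.
  assert (Hq : g u - g c = q * (u - c)) by (unfold q; field; exact Hne).
  nra.
Qed.

Lemma point_left_of (c a eta : R) : a < c -> 0 < eta ->
  exists u, a <= u < c /\ c - eta < u.
Proof.
  intros Hac Heta. exists (Rmax a (c - eta / 2)).
  pose proof (Rmax_l a (c - eta / 2)). pose proof (Rmax_r a (c - eta / 2)).
  assert (Rmax a (c - eta / 2) < c) by (apply Rmax_lub_lt; lra). lra.
Qed.

Lemma first_zero_of_sign_change (g : R -> R) (a b : R) : a <= b ->
  (forall v, a <= v <= b -> continuous g v) -> g a < 0 -> 0 <= g b ->
  exists c, a < c <= b /\ g c = 0 /\ forall u, a <= u < c -> g u < 0.
Proof.
  intros Hab Hg Ha Hb.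
  set (E := fun t => a <= t <= b /\ forall u, a <= u <= t -> g u < 0).
  assert (Ea : E a) by (split; [lra | intros u Hu; replace u with a by lra; exact Ha]).
  assert (Ebound : bound E) by (exists b; intros t [Ht _]; lra).
  destruct (completeness E Ebound (ex_intro _ a Ea)) as [c [Hub Hlub]].
  assert (Hac : a <= c) by exact (Hub a Ea).
  assert (Hcb : c <= b) by (apply Hlub; intros t [Ht _]; lra).
  assert (Hbelow : forall u, a <= u < c -> g u < 0).
  { intros u Hu. apply Rnot_le_lt. intros Hnn.
    assert (c <= u); [|lra].
    apply Hlub. intros t [Ht Hneg]. apply Rnot_lt_le. intros Hut.
    specialize (Hneg u ltac:(lra)). lra. }
  assert (Hc_nonneg : 0 <= g c).
  { apply Rnot_lt_le. intros Hneg.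
    destruct (continuous_lt_near g c 0 (Hg c ltac:(lra)) Hneg) as [eta [Heta Hnear]].
    assert (Hcb' : c < b) by (destruct Hcb as [|Hcb]; [lra | subst c; lra]).
    set (t := Rmin b (c + eta / 2)).
    assert (Hct : c < t) by (apply Rmin_glb_lt; lra).
    assert (Ht_eta : t <= c + eta / 2) by apply Rmin_r.
    assert (Ht : E t).
    { split; [split; [lra | apply Rmin_l]|].
      intros u Hu. destruct (Rlt_le_dec u c) as [Huc|Huc]; [apply Hbelow; lra|].
      apply Hnear. rewrite Rabs_pos_eq; lra. }
    specialize (Hub t Ht). lra. }
  assert (Hca : a < c) by (destruct Hac as [|Hac]; [lra | subst c; lra]).
  assert (Hc_nonpos : g c <= 0).
  { apply Rnot_lt_le. intros Hpos.
    destruct (continuous_gt_near g c 0 (Hg c ltac:(lra)) Hpos) as [eta [Heta Hnear]].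
    destruct (point_left_of c a eta Hca Heta) as [u [Hu Hu']].
    specialize (Hnear u ltac:(rewrite Rabs_left; lra)).
    specialize (Hbelow u Hu). lra. }
  exists c. repeat split; lra || exact Hbelow.
Qed.

Lemma stays_negative (g : R -> R) (a : R) :
  (forall v, a <= v -> continuous g v) -> g a < 0 ->
  (forall v, a < v -> g v = 0 -> exists d, is_derive g v d /\ d < 0) ->
  forall v, a <= v -> g v < 0.
Proof.
  intros Hg Ha Hcross v Hv. apply Rnot_le_lt. intros Hnn.
  destruct (first_zero_of_sign_change g a v Hv) as [c [Hc [Hzero Hbelow]]]; auto.
  { intros u Hu. apply Hg. lra. }
  destruct (Hcross c ltac:(lra) Hzero) as [d [Hd Hdneg]].
  destruct (is_derive_neg_left g c d Hd Hdneg) as [eta [Heta Hleft]].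
  destruct (point_left_of c a eta ltac:(lra) Heta) as [u [Hu Hu']].
  specialize (Hleft u ltac:(lra)). specialize (Hbelow u Hu). lra.
Qed.

Lemma nonincreasing_of_Derive_neg (f : R -> R) :
  (forall v, ex_derive f v) -> (forall v, Derive f v < 0) ->
  forall a b, a <= b -> f b <= f a.
Proof.
  intros Hd Hneg a b Hab.
  destruct (MVT_gen f a b (Derive f)) as [c [_ Heq]].
  - intros t _. apply Derive_correct, Hd.
  - intros t _. apply continuity_pt_filterlim, continuous_of_ex_derive, Hd.
  - specialize (Hneg c). nra.
Qed.

Lemma lipschitz_of_derive_bound (f df : R -> R) (a b D y z : R) :
  (forall t, a <= t <= b -> is_derive f t (df t) /\ Rabs (df t) <= D) ->
  a <= y <= b -> a <= z <= b -> Rabs (f y - f z) <= D * Rabs (y - z).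
Proof.
  intros Hf Hy Hz.
  assert (Hin : forall t, Rmin z y <= t <= Rmax z y -> a <= t <= b).
  { intros t Ht. pose proof (Rmin_glb z y a). pose proof (Rmax_lub z y b). lra. }
  destruct (MVT_gen f z y df) as [c [Hc Heq]].
  - intros t Ht. apply Hf, Hin. lra.
  - intros t Ht. apply continuity_pt_filterlim, continuous_of_ex_derive.
    exists (df t). apply Hf, Hin, Ht.
  - rewrite Heq, Rabs_mult. apply Rmult_le_compat_r; [apply Rabs_pos|]. apply Hf, Hin, Hc.
Qed.

Lemma bounded_on_rectangle (f : R -> R -> R) (a b c d : R) :
  (forall x y, a <= x <= b -> c <= y <= d ->
     continuous (fun p : R * R => f (fst p) (snd p)) (x, y)) ->
  exists D, forall x y, a <= x <= b -> c <= y <= d -> Rabs (f x y) <= D.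
Proof.
  intros Hf.
  assert (Hradius : forall t : R * (R * unit), exists e : posreal,
    a <= fst t <= b -> c <= fst (snd t) <= d -> forall x y,
      Rabs (x - fst t) < e -> Rabs (y - fst (snd t)) < e ->
      Rabs (f x y - f (fst t) (fst (snd t))) < 1).
  { intros [t1 [t2 []]]. simpl.
    destruct (classic (a <= t1 <= b /\ c <= t2 <= d)) as [[H1 H2]|Hout].
    - destruct (proj1 (filterlim_locally _ _) (Hf t1 t2 H1 H2) (mkposreal 1 Rlt_0_1))
        as [e He].
      exists e. intros _ _ x y Hx Hy. exact (He (x, y) (conj Hx Hy)).
    - exists (mkposreal 1 Rlt_0_1). tauto. }
  destruct (choice _ Hradius) as [delta Hdelta].
  apply NNPP. intros Hunbounded.
  apply (compactness_list 2 (a, (c, tt)) (b, (d, tt)) delta). intros [l Hcover].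
  apply Hunbounded.
  pose (value := fun t : R * (R * unit) => Rabs (f (fst t) (fst (snd t))) + 1).
  exists (MaxRlist (List.map value l)). intros x y Hx Hy.
  destruct (Hcover (x, (y, tt))) as [[t1 [t2 []]] [Hin [Ht Hclose]]]; [simpl; tauto|].
  simpl in Ht, Hclose.
  assert (Hvalue := MaxRlist_P1 _ _ (List.in_map value _ _ Hin)).
  specialize (Hdelta (t1, (t2, tt))). simpl in Hdelta.
  specialize (Hdelta (proj1 Ht) (proj1 (proj2 Ht)) x y (proj1 Hclose) (proj1 (proj2 Hclose))).
  change (value (t1, (t2, tt))) with (Rabs (f t1 t2) + 1) in Hvalue.
  pose proof (Rabs_triang_inv (f x y) (f t1 t2)). lra.
Qed.

Lemma is_lim_seq_geometric_half (C : R) : is_lim_seq (fun n => C * (/2) ^ n) 0.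
Proof.
  replace 0 with (C * 0) by ring.
  apply (is_lim_seq_scal_l _ C 0), is_lim_seq_geom. rewrite Rabs_pos_eq; lra.
Qed.

Lemma le_0_of_le_geometric (A C : R) : (forall n, A <= C * (/2) ^ n) -> A <= 0.
Proof.
  intros H.
  exact (is_lim_seq_le (fun _ => A) _ A 0 H (is_lim_seq_const A) (is_lim_seq_geometric_half C)).
Qed.

Lemma geometric_steps_bound (u : nat -> R) (C : R) :
  (forall n, Rabs (u (S n) - u n) <= C * (/2) ^ n) ->
  forall n m, (n <= m)%nat -> Rabs (u m - u n) <= 2 * C * (/2) ^ n.
Proof.
  intros Hstep n m Hnm.
  assert (HC : 0 <= C).
  { specialize (Hstep O). pose proof (Rabs_pos (u 1%nat - u O)). simpl in Hstep. lra. }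
  assert (Htel : forall k,
    Rabs (u (n + k)%nat - u n) <= 2 * C * (/2) ^ n - 2 * C * (/2) ^ (n + k)).
  { induction k as [|k IH].
    - rewrite Nat.add_0_r, Rminus_diag, Rabs_R0. lra.
    - rewrite Nat.add_succ_r.
      replace (2 * C * (/ 2) ^ S (n + k)) with (C * (/2) ^ (n + k)) by (simpl; field).
      pose proof (Rabs_triang (u (S (n + k)) - u (n + k)%nat) (u (n + k)%nat - u n)).
      replace (u (S (n + k)) - u (n + k)%nat + (u (n + k)%nat - u n))
        with (u (S (n + k)) - u n) in * by ring.
      specialize (Hstep (n + k)%nat). lra. }
  replace m with (n + (m - n))%nat by lia.
  pose proof (pow_le (/2) (n + (m - n)) ltac:(lra)).
  specialize (Htel (m - n)%nat). nra.
Qed.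

Lemma geometric_steps_limit (u : nat -> R) (C : R) :
  (forall n, Rabs (u (S n) - u n) <= C * (/2) ^ n) ->
  exists l : R, is_lim_seq u l /\ forall n, Rabs (u n - l) <= 2 * C * (/2) ^ n.
Proof.
  intros Hstep.
  pose proof (geometric_steps_bound u C Hstep) as Hbound.
  destruct (proj2 (ex_lim_seq_cauchy_corr u)) as [l Hl].
  { intros eps.
    destruct (proj2 (is_lim_seq_spec _ _) (is_lim_seq_geometric_half (2 * C)) eps) as [N HN].
    exists N. intros n m Hn Hm.
    pose proof (HN n Hn) as HNn. pose proof (HN m Hm) as HNm.
    rewrite Rminus_0_r in HNn, HNm. apply Rabs_def2 in HNn, HNm.
    destruct (Nat.le_ge_cases n m) as [Hnm|Hmn].
    - rewrite Rabs_minus_sym. specialize (Hbound n m Hnm). lra.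
    - specialize (Hbound m n Hmn). lra. }
  exists l. split; [exact Hl|]. intros n.
  assert (Hlim : is_lim_seq (fun m => Rabs (u m - u n)) (Rabs (l - u n))).
  { apply (is_lim_seq_abs _ (l - u n)), is_lim_seq_minus'; [exact Hl | apply is_lim_seq_const]. }
  rewrite Rabs_minus_sym.
  refine (is_lim_seq_le_loc _ (fun _ => 2 * C * (/2) ^ n) _ _ _ Hlim (is_lim_seq_const _)).
  exists n. apply Hbound.
Qed.

Lemma Rmax_lipschitz (c a b : R) : Rabs (Rmax c a - Rmax c b) <= Rabs (a - b).
Proof.
  pose proof (Rle_abs (a - b)). pose proof (Rle_abs (- (a - b))). rewrite Rabs_Ropp in *.
  unfold Rmax. apply Rabs_le. repeat destruct Rle_dec; lra.
Qed.

Lemma Rmin_lipschitz (c a b : R) : Rabs (Rmin c a - Rmin c b) <= Rabs (a - b).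
Proof.
  pose proof (Rle_abs (a - b)). pose proof (Rle_abs (- (a - b))). rewrite Rabs_Ropp in *.
  unfold Rmin. apply Rabs_le. repeat destruct Rle_dec; lra.
Qed.

Lemma continuous_exp_affine (k T0 s : R) : continuous (fun u => exp (k * (u - T0))) s.
Proof. apply continuous_of_ex_derive. auto_derive. auto. Qed.

Lemma ex_RInt_of_continuous (g : R -> R) (a b : R) :
  (forall s, continuous g s) -> ex_RInt g a b.
Proof.
  intros Hg. apply (ex_RInt_continuous (V := R_CompleteNormedModule)). intros s _. apply Hg.
Qed.

Lemma is_derive_RInt_of_continuous (g : R -> R) (a v : R) :
  (forall s, continuous g s) -> is_derive (fun w => RInt g a w) v (g v).
Proof.
  intros Hg. apply (is_derive_RInt (V := R_NormedModule) g _ a); [|apply Hg].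
  apply filter_forall. intros b.
  apply (RInt_correct (V := R_CompleteNormedModule)), ex_RInt_of_continuous, Hg.
Qed.

Lemma RInt_lipschitz (g : R -> R) (T0 M a b : R) : (forall s, continuous g s) ->
  (forall s, T0 <= s -> Rabs (g s) <= M) -> T0 <= a -> T0 <= b ->
  Rabs (RInt g T0 a - RInt g T0 b) <= M * Rabs (a - b).
Proof.
  intros Hg HM Ha Hb.
  assert (Hex : forall c d, ex_RInt g c d) by (intros; apply ex_RInt_of_continuous, Hg).
  assert (Hchasles : RInt g T0 a - RInt g T0 b = RInt g b a).
  { rewrite <- (RInt_Chasles g T0 b a) by apply Hex. simpl. unfold plus; simpl. ring. }
  rewrite Hchasles.
  destruct (Rle_dec b a) as [Hba|Hab].
  - rewrite (Rabs_pos_eq (a - b)) by lra. rewrite Rmult_comm.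
    apply abs_RInt_le_const; auto. intros s Hs. apply HM. lra.
  - rewrite <- opp_RInt_swap by apply Hex. rewrite Rabs_Ropp.
    rewrite (Rabs_left (a - b)) by lra. replace (- (a - b)) with (b - a) by ring.
    rewrite Rmult_comm. apply abs_RInt_le_const; auto; [lra|]. intros s Hs. apply HM. lra.
Qed.

Lemma abs_RInt_minus_le (g1 g2 w : R -> R) (a b : R) : a <= b ->
  (forall s, continuous g1 s) -> (forall s, continuous g2 s) -> (forall s, continuous w s) ->
  (forall u, a <= u <= b -> Rabs (g1 u - g2 u) <= w u) ->
  Rabs (RInt g1 a b - RInt g2 a b) <= RInt w a b.
Proof.
  intros Hab H1 H2 Hw Hle.
  assert (Hdiff : forall s, continuous (fun u => g1 u - g2 u) s)
    by (intros s; apply (continuous_minus g1 g2); auto).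
  rewrite <- (RInt_minus g1 g2) by (apply ex_RInt_of_continuous; auto).
  apply Rle_trans with (1 := abs_RInt_le _ a b Hab (ex_RInt_of_continuous _ a b Hdiff)).
  apply RInt_le; auto.
  - apply ex_RInt_of_continuous. intros s. apply continuous_Rabs_comp, Hdiff.
  - apply ex_RInt_of_continuous, Hw.
  - intros u Hu. apply Hle. lra.
Qed.

Lemma RInt_exp_affine (k T0 s : R) : 0 < k ->
  RInt (fun u => exp (k * (u - T0))) T0 s = (exp (k * (s - T0)) - 1) / k.
Proof.
  intros Hk. apply is_RInt_unique.
  replace ((exp (k * (s - T0)) - 1) / k)
    with (minus (exp (k * (s - T0)) / k) (exp (k * (T0 - T0)) / k))
    by (unfold minus, plus, opp; simpl; rewrite Rminus_diag, Rmult_0_r, exp_0; field; lra).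
  apply (is_RInt_derive (fun u => exp (k * (u - T0)) / k)).
  - intros u _. auto_derive; auto. unfold Rminus. field. lra.
  - intros u _. apply continuous_exp_affine.
Qed.

Lemma RInt_exp_weight_le (K B T0 s : R) : 0 < K -> 0 <= B ->
  RInt (fun u => K * B * exp (2 * K * (u - T0))) T0 s <= B / 2 * exp (2 * K * (s - T0)).
Proof.
  intros HK HB.
  replace (RInt (fun u => K * B * exp (2 * K * (u - T0))) T0 s)
    with (K * B * RInt (fun u => exp (2 * K * (u - T0))) T0 s).
  2:{ symmetry. apply (RInt_scal (V := R_CompleteNormedModule)).
      apply ex_RInt_of_continuous, continuous_exp_affine. }
  rewrite RInt_exp_affine by lra.
  replace (K * B * ((exp (2 * K * (s - T0)) - 1) / (2 * K)))
    with (B / 2 * exp (2 * K * (s - T0)) - B / 2) by (field; lra).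
  lra.
Qed.

(** * Picard iteration *)

Section Picard.

Variables (G : R -> R -> R) (T0 x0 M : R).
Hypothesis M_pos : 0 < M.
Hypothesis G_continuous :
  forall s y, continuous (fun p : R * R => G (fst p) (snd p)) (s, y).
Hypothesis G_bounded : forall s y, T0 <= s -> Rabs (G s y) <= M.
Hypothesis G_lipschitz : forall T, exists K, 0 < K /\
  forall s y z, T0 <= s <= T -> Rabs (G s y - G s z) <= K * Rabs (y - z).

Lemma continuous_along (phi : R -> R) : (forall s, continuous phi s) ->
  forall s, continuous (fun s => G s (phi s)) s.
Proof.
  intros Hphi s. apply (continuous_comp_2 (fun s => s) phi G).
  - apply continuous_id.
  - apply Hphi.
  - apply G_continuous.
Qed.

Fixpoint picard_iter (n : nat) : R -> R :=
  match n with
  | O => fun _ => x0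
  | S n => fun v => x0 + RInt (fun s => G s (picard_iter n s)) T0 v
  end.

Lemma picard_iter_continuous (n : nat) (s : R) : continuous (picard_iter n) s.
Proof.
  revert s. induction n as [|n IH]; intros s; simpl.
  - apply continuous_const.
  - apply (continuous_plus (fun _ => x0) (fun v => RInt (fun s => G s (picard_iter n s)) T0 v)).
    + apply continuous_const.
    + apply continuous_of_ex_derive.
      eexists. apply is_derive_RInt_of_continuous, continuous_along, IH.
Qed.

Lemma picard_iter_T0 (n : nat) : picard_iter n T0 = x0.
Proof. destruct n; simpl; [reflexivity|]. rewrite RInt_point. apply Rplus_0_r. Qed.

Lemma picard_iter_lipschitz (n : nat) (a b : R) : T0 <= a -> T0 <= b ->
  Rabs (picard_iter n a - picard_iter n b) <= M * Rabs (a - b).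
Proof.
  intros Ha Hb. destruct n as [|n]; simpl.
  - rewrite Rminus_diag, Rabs_R0. apply Rmult_le_pos; [lra | apply Rabs_pos].
  - rewrite Rminus_plus_l_l. apply RInt_lipschitz; auto.
    apply continuous_along, picard_iter_continuous.
Qed.

(* The weight exp (2 K (s - T0)) makes each Picard step a contraction by 1/2. *)
Lemma picard_iter_step_weighted (T K : R) : 0 < K ->
  (forall s y z, T0 <= s <= T -> Rabs (G s y - G s z) <= K * Rabs (y - z)) ->
  forall n s, T0 <= s <= T ->
  Rabs (picard_iter (S n) s - picard_iter n s)
    <= M * (T - T0) * (/2) ^ n * exp (2 * K * (s - T0)).
Proof.
  intros HK HKlip n. induction n as [|n IH]; intros s Hs.
  - change (Rabs (x0 + RInt (fun u => G u x0) T0 s - x0)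
      <= M * (T - T0) * 1 * exp (2 * K * (s - T0))).
    rewrite Rplus_minus_l.
    assert (Hexp : 1 <= exp (2 * K * (s - T0))).
    { pose proof (exp_ineq1_le (2 * K * (s - T0))).
      assert (0 <= 2 * K * (s - T0)) by (apply Rmult_le_pos; lra). lra. }
    apply Rle_trans with ((s - T0) * M).
    + apply abs_RInt_le_const; [lra | | intros u Hu; apply G_bounded; lra].
      apply ex_RInt_of_continuous, (continuous_along (fun _ => x0)).
      intros; apply continuous_const.
    + assert (0 <= M * (T - T0)) by (apply Rmult_le_pos; lra). nra.
  - set (B := M * (T - T0) * (/2) ^ n).
    assert (HB : 0 <= B) by (apply Rmult_le_pos; [apply Rmult_le_pos | apply pow_le]; lra).
    change (Rabs ((x0 + RInt (fun u => G u (picard_iter (S n) u)) T0 s)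
                  - (x0 + RInt (fun u => G u (picard_iter n u)) T0 s))
      <= M * (T - T0) * (/2) ^ S n * exp (2 * K * (s - T0))).
    replace (M * (T - T0) * (/2) ^ S n) with (B / 2) by (unfold B; simpl; field).
    rewrite Rminus_plus_l_l.
    apply Rle_trans with (RInt (fun u => K * B * exp (2 * K * (u - T0))) T0 s).
    + apply abs_RInt_minus_le; [lra | apply continuous_along, picard_iter_continuous
                                   | apply continuous_along, picard_iter_continuous | |].
      * intros u. apply (continuous_mult (fun _ => K * B) (fun u => exp (2 * K * (u - T0)))).
        -- apply continuous_const.
        -- apply continuous_exp_affine.
      * intros u Hu. apply Rle_trans with (1 := HKlip u _ _ ltac:(lra)).
        rewrite Rmult_assoc. apply Rmult_le_compat_l; [lra|]. apply IH. lra.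
    + apply RInt_exp_weight_le; assumption.
Qed.

Lemma picard_iter_step_bound (T : R) : exists C, forall n s, T0 <= s <= T ->
  Rabs (picard_iter (S n) s - picard_iter n s) <= C * (/2) ^ n.
Proof.
  destruct (G_lipschitz T) as [K [HK HKlip]].
  exists (M * (T - T0) * exp (2 * K * (T - T0))). intros n s Hs.
  apply Rle_trans with (1 := picard_iter_step_weighted T K HK HKlip n s Hs).
  assert (Hexp : exp (2 * K * (s - T0)) <= exp (2 * K * (T - T0))).
  { destruct (Req_dec s T) as [->|Hne]; [lra|].
    apply Rlt_le, exp_increasing. apply Rmult_lt_compat_l; lra. }
  assert (0 <= M * (T - T0) * (/2) ^ n)
    by (apply Rmult_le_pos; [apply Rmult_le_pos | apply pow_le]; lra).
  replace (M * (T - T0) * exp (2 * K * (T - T0)) * (/2) ^ n)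
    with (M * (T - T0) * (/2) ^ n * exp (2 * K * (T - T0))) by ring.
  apply Rmult_le_compat_l; assumption.
Qed.

(* Extended by its value at [T0] to the left of [T0], where [G] is not controlled. *)
Definition picard_limit (s : R) : R :=
  real (Lim_seq (fun n => picard_iter n (Rmax T0 s))).

Lemma picard_limit_Rmax (s : R) : picard_limit s = picard_limit (Rmax T0 s).
Proof.
  unfold picard_limit. rewrite (Rmax_right T0 (Rmax T0 s)); [reflexivity | apply Rmax_l].
Qed.

Lemma picard_limit_approx (T : R) : exists C, forall n s, T0 <= s <= T ->
  Rabs (picard_iter n s - picard_limit s) <= 2 * C * (/2) ^ n.
Proof.
  destruct (picard_iter_step_bound T) as [C HC]. exists C. intros n s Hs.
  destruct (geometric_steps_limit (fun n => picard_iter n s) C (fun n => HC n s Hs))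
    as [l [Hl Herr]].
  replace (picard_limit s) with l; [apply Herr|].
  unfold picard_limit. rewrite Rmax_right by lra.
  rewrite (is_lim_seq_unique _ _ Hl). reflexivity.
Qed.

Lemma picard_limit_T0 : picard_limit T0 = x0.
Proof.
  unfold picard_limit. rewrite Rmax_left by lra.
  rewrite (Lim_seq_ext _ (fun _ => x0)) by (intros; apply picard_iter_T0).
  rewrite Lim_seq_const. reflexivity.
Qed.

Lemma picard_limit_lipschitz (a b : R) : T0 <= a -> T0 <= b ->
  Rabs (picard_limit a - picard_limit b) <= M * Rabs (a - b).
Proof.
  intros Ha Hb. destruct (picard_limit_approx (Rmax a b)) as [C HC].
  pose proof (Rmax_l a b). pose proof (Rmax_r a b).
  cut (Rabs (picard_limit a - picard_limit b) - M * Rabs (a - b) <= 0); [lra|].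
  apply (le_0_of_le_geometric _ (4 * C)). intros n.
  specialize (HC n a ltac:(lra)) as Hna. specialize (HC n b ltac:(lra)) as Hnb.
  pose proof (picard_iter_lipschitz n a b Ha Hb) as Hiter.
  pose proof (Rabs_triang (picard_limit a - picard_iter n a)
                (picard_iter n a - picard_limit b)) as T1.
  pose proof (Rabs_triang (picard_iter n a - picard_iter n b)
                (picard_iter n b - picard_limit b)) as T2.
  rewrite Rabs_minus_sym in Hna.
  replace (picard_limit a - picard_iter n a + (picard_iter n a - picard_limit b))
    with (picard_limit a - picard_limit b) in T1 by ring.
  replace (picard_iter n a - picard_iter n b + (picard_iter n b - picard_limit b))
    with (picard_iter n a - picard_limit b) in T2 by ring.
  lra.
Qed.

Lemma picard_limit_continuous (s : R) : continuous picard_limit s.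
Proof.
  apply (continuous_of_lipschitz _ M s M_pos). intros u.
  rewrite (picard_limit_Rmax u), (picard_limit_Rmax s).
  apply Rle_trans with (1 := picard_limit_lipschitz _ _ (Rmax_l T0 u) (Rmax_l T0 s)).
  apply Rmult_le_compat_l; [lra | apply Rmax_lipschitz].
Qed.

Lemma picard_limit_integral (v : R) : T0 <= v ->
  picard_limit v = x0 + RInt (fun s => G s (picard_limit s)) T0 v.
Proof.
  intros Hv. destruct (picard_limit_approx v) as [C HC]. destruct (G_lipschitz v) as [K [HK HKlip]].
  pose (I := fun phi : R -> R => RInt (fun s => G s (phi s)) T0 v).
  change (picard_limit v = x0 + I picard_limit).
  cut (Rabs (picard_limit v - (x0 + I picard_limit)) <= 0).
  { intros H. pose proof (Rabs_pos (picard_limit v - (x0 + I picard_limit))).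
    apply Rminus_diag_uniq, Rabs_eq_0. lra. }
  apply (le_0_of_le_geometric _ (C + K * (2 * C) * (v - T0))). intros n.
  assert (Hnext : Rabs (picard_iter (S n) v - picard_limit v) <= 2 * C * (/2) ^ S n)
    by (apply HC; lra).
  assert (Hint : Rabs (I (picard_iter n) - I picard_limit) <= K * (2 * C * (/2) ^ n) * (v - T0)).
  { apply Rle_trans with (RInt (fun _ => K * (2 * C * (/2) ^ n)) T0 v).
    - apply abs_RInt_minus_le; [exact Hv | apply continuous_along, picard_iter_continuous
                                 | apply continuous_along, picard_limit_continuous
                                 | intros; apply continuous_const |].
      intros u Hu. apply Rle_trans with (1 := HKlip u _ _ ltac:(lra)).
      apply Rmult_le_compat_l; [lra|]. apply HC. lra.
    - rewrite RInt_const. simpl. unfold scal; simpl. unfold mult; simpl. lra. }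
  change (picard_iter (S n) v) with (x0 + I (picard_iter n)) in Hnext.
  pose proof (Rabs_triang (x0 + I (picard_iter n) - picard_limit v)
                (I picard_limit - I (picard_iter n))) as Htri.
  rewrite (Rabs_minus_sym (I picard_limit)) in Htri.
  replace (x0 + I (picard_iter n) - picard_limit v + (I picard_limit - I (picard_iter n)))
    with (- (picard_limit v - (x0 + I picard_limit))) in Htri by ring.
  rewrite Rabs_Ropp in Htri. simpl pow in Hnext.
  replace ((C + K * (2 * C) * (v - T0)) * (/2) ^ n)
    with (2 * C * (/2 * (/2) ^ n) + K * (2 * C * (/2) ^ n) * (v - T0)) by field.
  lra.
Qed.

Lemma picard_limit_is_derive (v : R) : T0 < v ->
  is_derive picard_limit v (G v (picard_limit v)).
Proof.
  intros Hv.
  apply (is_derive_ext_loc (fun w => x0 + RInt (fun s => G s (picard_limit s)) T0 w)).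
  { assert (Hd : 0 < v - T0) by lra. exists (mkposreal _ Hd). intros w Hw.
    change (Rabs (w - v) < v - T0) in Hw. apply Rabs_def2 in Hw.
    symmetry. apply picard_limit_integral. lra. }
  pose proof (is_derive_plus (K := R_AbsRing) (V := R_NormedModule) (fun _ => x0)
    (fun w => RInt (fun s => G s (picard_limit s)) T0 w) v zero (G v (picard_limit v))
    (is_derive_const x0 v)
    (is_derive_RInt_of_continuous _ T0 v (continuous_along _ picard_limit_continuous))) as Hd.
  rewrite plus_zero_l in Hd. exact Hd.
Qed.

End Picard.

(** * Trapping a geodesic between the horizons *)

Definition clamp (X y : R) : R := Rmax 0 (Rmin X y).

Lemma clamp_range (X y : R) : 0 <= X -> 0 <= clamp X y <= X.
Proof. intros HX. unfold clamp, Rmax, Rmin. repeat destruct Rle_dec; lra. Qed.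

Lemma clamp_id (X y : R) : 0 <= y <= X -> clamp X y = y.
Proof. intros Hy. unfold clamp, Rmax, Rmin. repeat destruct Rle_dec; lra. Qed.

Lemma clamp_lipschitz (X y z : R) : Rabs (clamp X y - clamp X z) <= Rabs (y - z).
Proof. apply Rle_trans with (1 := Rmax_lipschitz _ _ _). apply Rmin_lipschitz. Qed.

Lemma clamp_continuous (X y : R) : continuous (clamp X) y.
Proof.
  apply (continuous_of_lipschitz _ 1); [lra|]. intros u.
  rewrite Rmult_1_l. apply clamp_lipschitz.
Qed.

Definition null_field (h : R -> R -> R) (xp : R -> R) (v y : R) : R :=
  /2 * h v y * (y - xp v) * y.

Lemma null_field_bound (H a p X Hmax : R) : 0 <= a <= X -> 0 < p <= X -> 0 <= H <= Hmax ->
  Rabs (/2 * H * (a - p) * a) <= Hmax * X * X / 2.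
Proof.
  intros Ha Hp HH.
  assert (Hap : Rabs (a - p) <= X) by (apply Rabs_le; lra).
  rewrite !Rabs_mult, (Rabs_pos_eq (/2)), (Rabs_pos_eq H), (Rabs_pos_eq a) by lra.
  pose proof (Rabs_pos (a - p)).
  assert (Rabs (a - p) * a <= X * X) by (apply Rmult_le_compat; lra).
  assert (H * (Rabs (a - p) * a) <= Hmax * (X * X)) by (apply Rmult_le_compat; nra).
  lra.
Qed.

Lemma null_field_lipschitz_bound (ha hb a b p X D Hmax : R) :
  0 <= a <= X -> 0 <= b <= X -> 0 < p <= X -> 0 <= D -> 0 <= hb <= Hmax ->
  Rabs (ha - hb) <= D * Rabs (a - b) ->
  Rabs (/2 * ha * (a - p) * a - /2 * hb * (b - p) * b)
    <= /2 * (D * (X * X) + Hmax * (2 * X)) * Rabs (a - b).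
Proof.
  intros Ha Hb Hp HD Hhb Hh.
  replace (/2 * ha * (a - p) * a - /2 * hb * (b - p) * b)
    with (/2 * ((ha - hb) * ((a - p) * a) + hb * ((a - b) * (a + b - p)))) by ring.
  rewrite Rabs_mult, (Rabs_pos_eq (/2)) by lra.
  assert (H1 : Rabs ((a - p) * a) <= X * X).
  { rewrite Rabs_mult, (Rabs_pos_eq a) by lra. pose proof (Rabs_pos (a - p)).
    apply Rmult_le_compat; try lra. apply Rabs_le; lra. }
  assert (H2 : Rabs (a + b - p) <= 2 * X) by (apply Rabs_le; lra).
  pose proof (Rabs_triang ((ha - hb) * ((a - p) * a)) (hb * ((a - b) * (a + b - p)))) as Htri.
  rewrite (Rabs_mult (ha - hb)), (Rabs_mult hb), (Rabs_mult (a - b)), (Rabs_pos_eq hb) in Htri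
    by lra.
  pose proof (Rabs_pos (a - b)). pose proof (Rabs_pos (ha - hb)).
  pose proof (Rabs_pos ((a - p) * a)). pose proof (Rabs_pos (a + b - p)).
  assert (Rabs (ha - hb) * Rabs ((a - p) * a) <= D * Rabs (a - b) * (X * X))
    by (apply Rmult_le_compat; lra).
  assert (hb * (Rabs (a - b) * Rabs (a + b - p)) <= Hmax * (Rabs (a - b) * (2 * X)))
    by (apply Rmult_le_compat; [lra | nra | lra | apply Rmult_le_compat_l; lra]).
  nra.
Qed.

Lemma upper_crossing_sign (H p q th hlo qlo : R) :
  0 < p -> 0 < th < 1 -> hlo < H -> qlo < q -> hlo * (th - 1) / 2 <= qlo ->
  /2 * H * (th * p - p) * (th * p) - th * (q * p ^ 2) < 0.
Proof.
  intros Hp Hth HH Hq Hkey.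
  replace (/2 * H * (th * p - p) * (th * p) - th * (q * p ^ 2))
    with (th * p ^ 2 * (H * (th - 1) / 2 - q)) by field.
  assert (0 < th * p ^ 2) by (apply Rmult_lt_0_compat; [lra | apply pow_lt; lra]).
  assert (H * (th - 1) < hlo * (th - 1)) by nra.
  nra.
Qed.

Lemma lower_crossing_sign (H x p X hhi : R) :
  0 < x <= X -> 0 < p <= X -> 0 < H <= hhi ->
  - (hhi * X) * x - /2 * H * (x - p) * x < 0.
Proof.
  intros Hx Hp HH.
  replace (- (hhi * X) * x - /2 * H * (x - p) * x)
    with (- (x * (hhi * X + H * (x - p) / 2))) by field.
  assert (0 < hhi * X) by (apply Rmult_lt_0_compat; lra).
  assert (H * (x - p) >= - (hhi * X)) by nra.
  assert (0 < x * (hhi * X + H * (x - p) / 2)) by (apply Rmult_lt_0_compat; lra).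
  lra.
Qed.

Section Trapping.

Variables (h dh : R -> R -> R) (xp : R -> R) (T0 X th hlo hhi qlo : R).
Hypothesis X_pos : 0 < X.
Hypothesis h_continuous : forall v y, 0 <= y <= X ->
  continuous (fun p : R * R => h (fst p) (snd p)) (v, y).
Hypothesis h_derive : forall v y, 0 <= y <= X -> is_derive (h v) y (dh v y).
Hypothesis dh_continuous : forall v y, 0 <= y <= X ->
  continuous (fun p : R * R => dh (fst p) (snd p)) (v, y).
Hypothesis h_pos : forall v y, 0 <= y <= X -> 0 < h v y.
Hypothesis h_bounds : forall v y, T0 <= v -> 0 <= y <= X -> hlo < h v y <= hhi.
Hypothesis xp_derive : forall v, ex_derive xp v.
Hypothesis xp_range : forall v, T0 <= v -> 0 < xp v <= X.
Hypothesis xp_rate : forall v, T0 <= v -> qlo < Derive xp v / xp v ^ 2.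
Hypothesis th_range : 0 < th < 1.
Hypothesis th_barrier : hlo * (th - 1) / 2 <= qlo.

Definition clamped_field (s y : R) : R := null_field h xp s (clamp X y).

Lemma xp_continuous (v : R) : continuous xp v.
Proof. apply continuous_of_ex_derive, xp_derive. Qed.

Lemma clamped_field_continuous (s y : R) :
  continuous (fun p : R * R => clamped_field (fst p) (snd p)) (s, y).
Proof.
  assert (Hc : continuous (fun p : R * R => clamp X (snd p)) (s, y)).
  { apply (continuous_comp snd (clamp X)); [apply continuous_snd | apply clamp_continuous]. }
  assert (Hh : continuous (fun p : R * R => h (fst p) (clamp X (snd p))) (s, y)).
  { apply (continuous_comp_2 fst (fun p => clamp X (snd p)) h); [apply continuous_fst | exact Hc |].
    apply h_continuous, clamp_range. lra. }
  assert (Hxp : continuous (fun p : R * R => xp (fst p)) (s, y)).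
  { apply (continuous_comp fst xp); [apply continuous_fst | apply xp_continuous]. }
  unfold clamped_field, null_field.
  apply (continuous_mult (K := R_AbsRing)); [|exact Hc].
  apply (continuous_mult (K := R_AbsRing)).
  - apply (continuous_mult (K := R_AbsRing)); [apply continuous_const | exact Hh].
  - apply (continuous_minus (fun p : R * R => clamp X (snd p)) (fun p => xp (fst p))); assumption.
Qed.

Lemma hhi_pos : 0 < hhi.
Proof.
  pose proof (h_bounds T0 0 ltac:(lra) ltac:(lra)). pose proof (h_pos T0 0 ltac:(lra)). lra.
Qed.

Lemma field_bound_pos : 0 < hhi * X * X / 2.
Proof.
  pose proof hhi_pos. assert (0 < hhi * X * X) by (repeat apply Rmult_lt_0_compat; lra). lra.
Qed.

Lemma clamped_field_bounded (s y : R) : T0 <= s -> Rabs (clamped_field s y) <= hhi * X * X / 2.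
Proof.
  intros Hs. pose proof (clamp_range X y ltac:(lra)) as Hc.
  pose proof (h_pos s _ Hc). pose proof (h_bounds s _ Hs Hc).
  apply null_field_bound; [exact Hc | apply xp_range, Hs | lra].
Qed.

Lemma clamped_field_lipschitz (T : R) : exists K, 0 < K /\ forall s y z, T0 <= s <= T ->
  Rabs (clamped_field s y - clamped_field s z) <= K * Rabs (y - z).
Proof.
  destruct (bounded_on_rectangle dh T0 T 0 X) as [D HD].
  { intros v y _ Hy. apply dh_continuous, Hy. }
  pose proof (Rabs_pos D). pose proof hhi_pos.
  assert (0 <= Rabs D * (X * X)) by (apply Rmult_le_pos; nra).
  assert (0 <= hhi * (2 * X)) by nra.
  exists (/2 * (Rabs D * (X * X) + hhi * (2 * X)) + 1). split; [nra|].
  intros s y z Hs. unfold clamped_field, null_field.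
  pose proof (clamp_range X y ltac:(lra)) as Hy. pose proof (clamp_range X z ltac:(lra)) as Hz.
  pose proof (clamp_lipschitz X y z). pose proof (Rabs_pos (clamp X y - clamp X z)).
  pose proof (h_pos s _ Hz). pose proof (h_bounds s _ ltac:(lra) Hz).
  apply Rle_trans with (/2 * (Rabs D * (X * X) + hhi * (2 * X)) * Rabs (clamp X y - clamp X z)).
  - apply null_field_lipschitz_bound; try lra; [apply xp_range; lra|].
    apply (lipschitz_of_derive_bound (h s) (dh s) 0 X); try assumption.
    intros t Ht. split; [apply h_derive, Ht|].
    apply Rle_trans with (1 := HD s t ltac:(lra) Ht). apply Rle_abs.
  - apply Rmult_le_compat; lra.
Qed.

Let x0 := th * xp T0 / 2.
Let x := picard_limit clamped_field T0 x0.

Lemma solution_continuous (v : R) : continuous x v.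
Proof.
  exact (picard_limit_continuous clamped_field T0 x0 _ field_bound_pos clamped_field_continuous
           clamped_field_bounded clamped_field_lipschitz v).
Qed.

Lemma solution_is_derive (v : R) : T0 < v -> 0 <= x v <= X ->
  is_derive x v (null_field h xp v (x v)).
Proof.
  intros Hv Hx.
  pose proof (picard_limit_is_derive clamped_field T0 x0 _ field_bound_pos clamped_field_continuous
                clamped_field_bounded clamped_field_lipschitz v Hv) as Hd.
  unfold clamped_field in Hd. rewrite clamp_id in Hd by exact Hx. exact Hd.
Qed.

Lemma solution_below_fraction (v : R) : T0 <= v -> x v < th * xp v.
Proof.
  intros Hv. cut (x v - th * xp v < 0); [lra|]. revert v Hv.
  apply (stays_negative (fun v => x v - th * xp v)).
  - intros u _. apply (continuous_minus x (fun u => th * xp u)); [apply solution_continuous|].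
    apply (continuous_scal_r th xp), xp_continuous.
  - unfold x. rewrite picard_limit_T0. unfold x0. pose proof (xp_range T0 ltac:(lra)). nra.
  - intros u Hu Hcross. pose proof (xp_range u ltac:(lra)) as Hp.
    assert (Hxu : x u = th * xp u) by lra.
    exists (null_field h xp u (x u) - th * Derive xp u). split.
    + apply (is_derive_minus x (fun u => th * xp u)).
      * apply solution_is_derive; [exact Hu|]. nra.
      * apply is_derive_scal, Derive_correct, xp_derive.
    + replace (Derive xp u) with (Derive xp u / xp u ^ 2 * xp u ^ 2) by (field; lra).
      unfold null_field. rewrite Hxu.
      pose proof (h_bounds u (th * xp u) ltac:(lra) ltac:(nra)).
      apply (upper_crossing_sign _ _ _ _ hlo qlo); try lra. apply xp_rate. lra.
Qed.

Lemma solution_above_exponential (v : R) : T0 <= v ->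
  th * xp T0 / 4 * exp (- (hhi * X) * (v - T0)) < x v.
Proof.
  pose (c := th * xp T0 / 4).
  pose proof (xp_range T0 ltac:(lra)). pose proof hhi_pos.
  assert (Hc : 0 < c <= X) by (unfold c; nra).
  intros Hv. cut (c * exp (- (hhi * X) * (v - T0)) - x v < 0); [unfold c; lra|]. revert v Hv.
  apply (stays_negative (fun v => c * exp (- (hhi * X) * (v - T0)) - x v)).
  - intros u _. apply (continuous_minus (fun u => c * exp (- (hhi * X) * (u - T0))) x).
    + apply (continuous_scal_r c (fun u => exp (- (hhi * X) * (u - T0)))), continuous_exp_affine.
    + apply solution_continuous.
  - unfold x. rewrite picard_limit_T0, Rminus_diag, Rmult_0_r, exp_0. unfold c, x0. nra.
  - intros u Hu Hcross.
    assert (Hexp : 0 < exp (- (hhi * X) * (u - T0)) <= 1).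
    { split; [apply exp_pos|]. rewrite <- exp_0. apply Rlt_le, exp_increasing.
      assert (0 < hhi * X * (u - T0)) by (repeat apply Rmult_lt_0_compat; lra). lra. }
    assert (Hxu : x u = c * exp (- (hhi * X) * (u - T0))) by lra.
    assert (Hxrange : 0 < x u <= X) by (rewrite Hxu; nra).
    exists (c * (- (hhi * X) * exp (- (hhi * X) * (u - T0))) - null_field h xp u (x u)).
    split.
    + apply (is_derive_minus (fun u => c * exp (- (hhi * X) * (u - T0))) x).
      * auto_derive; [auto | unfold Rminus; ring].
      * apply solution_is_derive; lra.
    + replace (c * (- (hhi * X) * exp (- (hhi * X) * (u - T0)))) with (- (hhi * X) * x u)
        by (rewrite Hxu; ring).
      pose proof (h_pos u (x u) ltac:(lra)). pose proof (h_bounds u (x u) ltac:(lra) ltac:(lra)).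
      apply (lower_crossing_sign _ _ _ X); try lra. apply xp_range. lra.
Qed.

Lemma solution_trapped (v : R) : T0 <= v -> 0 < x v < xp v.
Proof.
  intros Hv. pose proof (xp_range T0 ltac:(lra)). pose proof (xp_range v Hv).
  pose proof (solution_below_fraction v Hv). pose proof (solution_above_exponential v Hv).
  assert (0 < th * xp T0 / 4 * exp (- (hhi * X) * (v - T0)))
    by (apply Rmult_lt_0_compat; [nra | apply exp_pos]).
  nra.
Qed.

Theorem trapped_geodesic : type2 h xp.
Proof.
  exists (T0 + 1), x. split.
  - intros v Hv. replace (x v - 0) with (x v) by ring.
    pose proof (solution_trapped v ltac:(lra)). pose proof (xp_range v ltac:(lra)).
    apply solution_is_derive; lra.
  - intros v Hv. apply solution_trapped. lra.
Qed.

End Trapping.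

Lemma trapping_parameters (hc L : R) : - hc / 2 < L ->
  exists th eps, 0 < th < 1 /\ 0 < eps /\ (hc - eps) * (th - 1) / 2 <= L - eps.
Proof.
  intros HL. set (gap := L + hc / 2). assert (Hgap : 0 < gap) by (unfold gap; lra).
  pose proof (Rabs_pos hc). pose proof (Rle_abs hc).
  exists (gap / (2 * (Rabs hc + gap))), (gap / 4).
  set (th := gap / (2 * (Rabs hc + gap))).
  assert (Hth : 0 < th < 1 /\ th * Rabs hc <= gap / 2).
  { unfold th. split; [split|].
    - apply Rdiv_lt_0_compat; lra.
    - apply Rmult_lt_reg_r with (2 * (Rabs hc + gap)); [lra|]. field_simplify; lra.
    - apply Rmult_le_reg_r with (2 * (Rabs hc + gap)); [lra|]. field_simplify; nra. }
  assert (th * hc <= th * Rabs hc) by (apply Rmult_le_compat_l; lra).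
  assert (0 <= gap / 4 * th) by nra.
  assert (gap = L + hc / 2) by reflexivity. repeat split; nra.
Qed.

Lemma is_lim_p_infty_eventually (f : R -> R) (l eps : R) :
  is_lim f p_infty l -> 0 < eps -> exists V, forall v, V < v -> Rabs (f v - l) < eps.
Proof.
  intros Hf Heps. destruct (Hf (fun y => Rabs (y - l) < eps)) as [V HV].
  - exists (mkposreal eps Heps). intros y Hy. exact Hy.
  - exists V. exact HV.
Qed.

Lemma joint_limit_eventually (h : R -> R -> R) (hc eps : R) :
  filterlim (fun p : R * R => h (fst p) (snd p))
    (filter_prod (Rbar_locally p_infty) (locally 0)) (locally hc) -> 0 < eps ->
  exists V del, 0 < del /\ forall v y, V < v -> Rabs y < del -> Rabs (h v y - hc) < eps.
Proof.
  intros Hh Heps. destruct (Hh (fun y => Rabs (y - hc) < eps)) as [Q R0 [V HV] [del Hdel] HQR].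
  - exists (mkposreal eps Heps). intros y Hy. exact Hy.
  - exists V, del. split; [apply cond_pos|]. intros v y Hv Hy.
    apply (HQR v y (HV v Hv)), Hdel. change (Rabs (y - 0) < del). rewrite Rminus_0_r. exact Hy.
Qed.

Theorem corollary3
  (rc : R) (h : R -> R -> R) (dh : R -> R -> R) (xp : R -> R) (hc L : R)
  (Hrc : 0 < rc)
  (* regularity and positivity of h on the region r = x + r_c > 0 *)
  (Hhcont : forall v x, -rc < x -> continuous (fun p : R * R => h (fst p) (snd p)) (v, x))
  (Hdh : forall v x, -rc < x -> is_derive (h v) x (dh v x))
  (Hdhcont : forall v x, -rc < x -> continuous (fun p : R * R => dh (fst p) (snd p)) (v, x))
  (Hhpos : forall v x, -rc < x -> 0 < h v x)
  (* h_c = lim_{v -> oo} h(v, r_c), attained as a joint limit (v,x) -> (oo,0) *)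
  (Hhc : filterlim (fun p : R * R => h (fst p) (snd p))
           (filter_prod (Rbar_locally p_infty) (locally 0)) (locally hc))
  (* outer AH: x_+ > 0 = x_-, differentiable, strictly decreasing, x_+ -> 0 *)
  (Hxp_der : forall v, ex_derive xp v)
  (Hxp_dec : forall v, Derive xp v < 0)
  (Hxp_pos : forall v, 0 < xp v)
  (Hxp_lim : is_lim xp p_infty 0)
  (* hypothesis of the corollary *)
  (HL : is_lim (fun v => Derive xp v / (xp v) ^ 2) p_infty L)
  (HLbound : - hc / 2 < L) :
  type2 h xp.
Proof.
  destruct (trapping_parameters hc L HLbound) as [th [eps [Hth [Heps Hkey]]]].
  destruct (joint_limit_eventually h hc eps Hhc Heps) as [V1 [del [Hdel Hnear]]].
  destruct (is_lim_p_infty_eventually _ _ _ HL Heps) as [V2 Hrate].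
  destruct (is_lim_p_infty_eventually _ _ _ Hxp_lim Hdel) as [V3 Hsmall].
  set (T0 := Rmax (Rmax V1 V2) V3 + 1).
  assert (HT0 : V1 < T0 /\ V2 < T0 /\ V3 < T0).
  { unfold T0. pose proof (Rmax_l V1 V2). pose proof (Rmax_r V1 V2).
    pose proof (Rmax_l (Rmax V1 V2) V3). pose proof (Rmax_r (Rmax V1 V2) V3). lra. }
  assert (Hxp_range : forall v, T0 <= v -> 0 < xp v <= xp T0).
  { intros v Hv. split; [apply Hxp_pos|].
    exact (nonincreasing_of_Derive_neg xp Hxp_der Hxp_dec _ _ Hv). }
  assert (HX : xp T0 < del).
  { specialize (Hsmall T0 ltac:(lra)). rewrite Rminus_0_r, Rabs_pos_eq in Hsmall; [lra|].
    apply Rlt_le, Hxp_pos. }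
  apply (trapped_geodesic h dh xp T0 (xp T0) th (hc - eps) (hc + eps) (L - eps)); auto.
  - intros v y Hy. apply Hhcont. lra.
  - intros v y Hy. apply Hdh. lra.
  - intros v y Hy. apply Hdhcont. lra.
  - intros v y Hy. apply Hhpos. lra.
  - intros v y Hv Hy. specialize (Hnear v y ltac:(lra) ltac:(rewrite Rabs_pos_eq; lra)).
    apply Rabs_def2 in Hnear. lra.
  - intros v Hv. specialize (Hrate v ltac:(lra)). apply Rabs_def2 in Hrate. lra.
Qed.
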